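(* Let $R$ be a commutative ring with identity and $M$ a finitely generated multiplication $R$-module. Then $$\sum_{a\in\sqrt{(0:M)}} a\Gamma_a(M)=\beta(M).$$
   Context: $M$ is a multiplication module if every submodule $N$ of $M$ is of the form $IM$ for some ideal $I$ of $R$. $(0:M)=\{r\in R\mid rM=0\}$ and $\sqrt{(0:M)}$ is its radical. For $a\in R$, $a\Gamma_{a}(M)=\{am \mid m\in M,\ a^{k}m=0 \text{ for some } k\in\mathbb{Z}^{+}\}$. A proper submodule $N$ of $M$ is prime if for all $r\in R$, $m\in M$, $rm\in N$ implies $m\in N$ or $rM\subseteq N$; $\beta(M)$ is the intersection of all prime submodules of $M$. *)

From HB Require Import structures.
From mathcomp Require Import all_boot all_order all_algebra.
Set Implicit Arguments. Unset Strict Implicit. Unset Printing Implicit Defensive.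
Import GRing.Theory.
Local Open Scope ring_scope.

Definition is_ideal (R : comPzRingType) (I : R -> Prop) : Prop :=
  [/\ I 0, (forall a b, I a -> I b -> I (a + b)) & (forall r a, I a -> I (r * a))].

Definition is_submodule (R : comPzRingType) (M : lmodType R) (N : M -> Prop) : Prop :=
  [/\ N 0, (forall x y, N x -> N y -> N (x + y)) & (forall (r : R) x, N x -> N (r *: x))].

Definition ideal_mul (R : comPzRingType) (M : lmodType R) (I : R -> Prop) (x : M) : Prop :=
  exists s : seq (R * M),
    (forall p, p \in s -> I p.1) /\ x = \sum_(p <- s) p.1 *: p.2.

Definition multiplication_module (R : comPzRingType) (M : lmodType R) : Prop :=
  forall N : M -> Prop, is_submodule N ->
    exists I : R -> Prop, is_ideal I /\ forall x, N x <-> ideal_mul I x.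

Definition fin_gen (R : comPzRingType) (M : lmodType R) : Prop :=
  exists s : seq M, forall x : M,
    exists r : 'I_(size s) -> R, x = \sum_(i < size s) r i *: s`_i.

Definition ann (R : comPzRingType) (M : lmodType R) (r : R) : Prop :=
  forall m : M, r *: m = 0.

Definition rad_ann (R : comPzRingType) (M : lmodType R) (a : R) : Prop :=
  exists n : nat, ann M (a ^+ n).

Definition Gamma (R : comPzRingType) (M : lmodType R) (a : R) (m : M) : Prop :=
  exists k : nat, (0 < k)%N /\ a ^+ k *: m = 0.

Definition aGamma (R : comPzRingType) (M : lmodType R) (a : R) (x : M) : Prop :=
  exists m : M, Gamma a m /\ x = a *: m.

Definition sum_aGamma (R : comPzRingType) (M : lmodType R) (x : M) : Prop :=
  exists s : seq (R * M),
    (forall p, p \in s -> rad_ann M p.1 /\ aGamma p.1 p.2) /\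
    x = \sum_(p <- s) p.2.

Definition prime_submodule (R : comPzRingType) (M : lmodType R) (N : M -> Prop) : Prop :=
  [/\ is_submodule N, (exists m, ~ N m) &
      (forall (r : R) (m : M), N (r *: m) -> N m \/ (forall m' : M, N (r *: m')))].

(* beta(M): intersection of all prime submodules (M itself if there are none). *)
Definition beta (R : comPzRingType) (M : lmodType R) (x : M) : Prop :=
  forall N : M -> Prop, prime_submodule N -> N x.

From HB Require Import structures.
From mathcomp Require Import all_boot all_order all_algebra.
From mathcomp Require Import boolp classical_sets ring.
Set Implicit Arguments. Unset Strict Implicit. Unset Printing Implicit Defensive.
Import GRing.Theory.
Local Open Scope classical_set_scope.
Local Open Scope ring_scope.

(* If a^n M = 0 and N is a prime submodule, then a^(n+1) m lies in N, and
   primality peels off the factors a one at a time, so every a Gamma_a(M)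
   with a in sqrt(0:M) lies in beta(M).  Conversely it suffices to show
   beta(M) <= sqrt(0:M) M.  For a prime ideal p containing (0:M), the
   determinant-trick form of Nakayama's lemma (a M <= p M forces a in p, as M
   is finitely generated) together with Rm = (Rm : M) M shows that p M is a
   prime submodule when proper, and that x lies in p M iff (Rx : M) <= p.  If
   x is not in sqrt(0:M) M, some j in (Rx : M) is not nilpotent on M; a prime
   ideal containing (0:M) and avoiding the powers of j then gives a prime
   submodule p M missing x. *)

Definition prime_ideal (R : comPzRingType) (p : R -> Prop) :=
  [/\ is_ideal p, ~ p 1 & forall a b, p (a * b) -> p a \/ p b].

Section PrimeAvoidingPowers.
Variables (R : comPzRingType) (A : R -> Prop) (j : R).

Definition avoiding_powers (X : R -> Prop) :=
  [/\ is_ideal X, (forall r, A r -> X r) & forall n, ~ X (j ^+ n)].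

Lemma bigcup_avoiding_powers (F : set (set R)) :
  F `<=` avoiding_powers -> total_on F subset -> (exists X, F X) ->
  avoiding_powers (\bigcup_(X in F) X).
Proof.
move=> Favoid Ftot [X0 FX0]; have [[X00 _ _] AX0 _] := Favoid X0 FX0.
split; [split | by move=> r /AX0; exists X0 |].
- by exists X0.
- move=> a b [X FX Xa] [Y FY Yb].
  have [XY | YX] := Ftot X Y FX FY.
    by have [[_ YD _] _ _] := Favoid Y FY; exists Y => //; apply: YD => //; apply: XY.
  by have [[_ XD _] _ _] := Favoid X FX; exists X => //; apply: XD => //; apply: YX.
- move=> r a [X FX Xa]; have [[_ _ XM] _ _] := Favoid X FX.
  by exists X => //; apply: XM.
- by move=> n [X FX Xj]; have [_ _ Xnj] := Favoid X FX; apply: Xnj Xj.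
Qed.

Definition ideal_adjoin (P : R -> Prop) (c : R) (x : R) :=
  exists y z, P y /\ x = y + z * c.

Lemma ideal_adjoin_ideal P c : is_ideal P -> is_ideal (ideal_adjoin P c).
Proof.
move=> [P0 PD PM]; split.
- by exists 0, 0; rewrite mul0r addr0.
- move=> _ _ [y1 [z1 [Py1 ->]]] [y2 [z2 [Py2 ->]]].
  by exists (y1 + y2), (z1 + z2); split; [apply: PD | rewrite mulrDl addrACA].
- move=> r _ [y [z [Py ->]]].
  by exists (r * y), (r * z); split; [apply: PM | rewrite mulrDr mulrA].
Qed.

Lemma maximal_avoiding_powers_prime P :
  avoiding_powers P ->
  (forall B, avoiding_powers B -> P `<=` B -> B `<=` P) -> prime_ideal P.
Proof.
move=> [[P0 PD PM] AP Pj] Pmax.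
have power_adjoin c : ~ P c -> exists n y z, P y /\ j ^+ n = y + z * c.
  move=> Pc; apply: contrapT => no_power; apply: Pc.
  apply: (Pmax (ideal_adjoin P c)); last by exists 0, 1; rewrite mul1r add0r.
    split; first exact: ideal_adjoin_ideal.
      by move=> r /AP Pr; exists r, 0; rewrite mul0r addr0.
    by move=> n [y [z [Py jn]]]; apply: no_power; exists n, y, z.
  by move=> x Px; exists x, 0; rewrite mul0r addr0.
split=> //; first by move=> P1; apply: (Pj 0%N); rewrite expr0.
move=> a b Pab; apply: contrapT => /not_orP[Pa Pb].
have [n [y1 [z1 [Py1 ja]]]] := power_adjoin a Pa.
have [k [y2 [z2 [Py2 jb]]]] := power_adjoin b Pb.
apply: (Pj (n + k)%N); rewrite exprD ja jb.
have -> : (y1 + z1 * a) * (y2 + z2 * b) =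
    (y2 + z2 * b) * y1 + z1 * a * y2 + z1 * z2 * (a * b) by ring.
by apply: (PD); [apply: (PD)|]; apply: (PM).
Qed.

Lemma exists_prime_avoiding_powers :
  is_ideal A -> (forall n, ~ A (j ^+ n)) ->
  exists p, [/\ prime_ideal p, (forall r, A r -> p r) & ~ p j].
Proof.
move=> IA Aj; have avA : avoiding_powers A by split.
pose sub (X Y : {X | avoiding_powers X}) := `[< sval X `<=` sval Y >].
have [[P avP] Pmax] : exists t, premaximal sub t.
  apply: (ZL_preorder (exist _ A avA)).
- by move=> X; apply/asboolP.
- by move=> X Y Z /asboolP XY /asboolP YZ; apply/asboolP; apply: subset_trans YZ.
- (* Adjoining A keeps the chain a chain and makes it nonempty. *)
  move=> C Ctot; pose F := [set sval X | X in C] `|` [set A].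
  have avF : F `<=` avoiding_powers by move=> _ [[[X avX] _ <-]|->].
  have AF X : F X -> A `<=` X by move=> /avF [].
  have Ftot : total_on F subset.
    move=> _ _ [[X CX <-]|->] [[Y CY <-]|->].
    - by have [/asboolP|/asboolP] := Ctot X Y CX CY; [left|right].
    - by right; apply: AF; left; exists X.
    - by left; apply: AF; left; exists Y.
    - by left.
  exists (exist _ _ (bigcup_avoiding_powers avF Ftot (ex_intro _ A (or_intror erefl)))).
  by move=> X CX; apply/asboolP => x Xx; exists (sval X) => //; left; exists X.
have [_ AP Pj] := avP; exists P; split=> //; last by apply: (Pj 1%N); rewrite expr1.
apply: maximal_avoiding_powers_prime => // B avB PB.
by apply/asboolP; apply: (Pmax (exist _ B avB)); apply/asboolP.
Qed.

End PrimeAvoidingPowers.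

Section IdealSpan.
Variables (R : comPzRingType) (M : lmodType R).

Fixpoint ideal_span (I : R -> Prop) (l : seq M) (y : M) : Prop :=
  if l is m :: l' then exists2 c, I c & ideal_span I l' (y - c *: m)
  else y = 0.

Variable I : R -> Prop.
Hypothesis I_ideal : is_ideal I.

Lemma ideal_span0 l : ideal_span I l 0.
Proof.
have [I0 _ _] := I_ideal.
by elim: l => [|m l IHl] //=; exists 0; rewrite // scale0r subr0.
Qed.

Lemma ideal_spanD l y z :
  ideal_span I l y -> ideal_span I l z -> ideal_span I l (y + z).
Proof.
have [_ ID _] := I_ideal.
elim: l y z => [|m l IHl] y z /=; first by move=> -> ->; rewrite addr0.
move=> [c Ic Iy] [d Id Iz]; exists (c + d); first exact: ID.
by rewrite scalerDl opprD addrACA; apply: IHl.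
Qed.

Lemma ideal_spanZ l (r : R) y : ideal_span I l y -> ideal_span I l (r *: y).
Proof.
have [_ _ IM] := I_ideal.
elim: l y => [|m l IHl] y /=; first by move=> ->; rewrite scaler0.
move=> [c Ic Iy]; exists (r * c); first exact: IM.
by rewrite -scalerA -scalerBr; apply: IHl.
Qed.

Lemma ideal_span_nth l k c : I c -> ideal_span I l (c *: l`_k).
Proof.
have [I0 _ _] := I_ideal.
elim: l k => [|m l IHl] [|k] Ic /=; rewrite ?nth_nil ?scaler0 //.
  by exists c; rewrite // subrr; apply: ideal_span0.
by exists 0; rewrite // scale0r subr0; apply: IHl.
Qed.

Lemma ideal_mul_span l :
  (forall x : M, exists r : 'I_(size l) -> R, x = \sum_(i < size l) r i *: l`_i) ->
  forall y, ideal_mul I y -> ideal_span I l y.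
Proof.
have [_ _ IM] := I_ideal.
move=> l_gen _ [s [Is ->]].
rewrite big_seq; apply: (big_ind (ideal_span I l)).
- exact: ideal_span0.
- exact: ideal_spanD.
move=> q /Is Iq; have [r ->] := l_gen q.2.
rewrite scaler_sumr; apply: (big_ind (ideal_span I l)).
- exact: ideal_span0.
- exact: ideal_spanD.
by move=> i _; rewrite scalerA mulrC; apply/ideal_span_nth/IM.
Qed.

End IdealSpan.

Lemma ideal_span_ann (R : comPzRingType) (M : lmodType R) (I : R -> Prop)
    (l : seq M) (t : R) y :
  (forall m, m \in l -> t *: m = 0) -> ideal_span I l y -> t *: y = 0.
Proof.
elim: l y => [|m l IHl] y /=; first by move=> _ ->; rewrite scaler0.
move=> tl [c _ Iy]; rewrite -(subrK (c *: m) y) scalerDr.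
rewrite (IHl _ _ Iy); last by move=> m' m'l; apply: tl; rewrite inE m'l orbT.
by rewrite scalerA mulrC -scalerA tl ?mem_head // scaler0 add0r.
Qed.

(* The determinant trick, one generator at a time: writing s m = c m + ...
   for the first generator m, the factor s - c moves m into the span of the
   remaining generators, and s is replaced by (s - c) s. *)
Lemma ideal_span_nakayama (R : comPzRingType) (M : lmodType R) (p : R -> Prop)
    (l : seq M) (s : R) :
  prime_ideal p -> ~ p s -> (forall m, m \in l -> ideal_span p l (s *: m)) ->
  exists2 t, ~ p t & forall m, m \in l -> t *: m = 0.
Proof.
move=> [Ip _ p_prime]; have [_ pD _] := Ip.
elim: l s => [|m l IHl] s ps sl; first by exists s.
have [c pc spanm] := sl m (mem_head _ _).
have pu : ~ p (s - c).
  by move=> pu; apply: ps; rewrite -(subrK c s); apply: pD.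
have um : ideal_span p l ((s - c) *: m) by rewrite scalerBl.
have [t pt tl] : exists2 t, ~ p t & forall m', m' \in l -> t *: m' = 0.
  apply: (IHl ((s - c) * s)); first by case/p_prime.
  move=> m' m'l; have /sl[d pd spanm'] : m' \in m :: l by rewrite inE m'l orbT.
  have -> : ((s - c) * s) *: m' = (s - c) *: (s *: m' - d *: m) + d *: ((s - c) *: m).
    by rewrite scalerBr !scalerA mulrC [d * _]mulrC subrK.
  by apply: ideal_spanD => //; apply: ideal_spanZ.
exists (t * (s - c)); first by case/p_prime.
move=> m'; rewrite inE => /predU1P [-> | m'l].
  by rewrite -scalerA; apply: ideal_span_ann um.
by rewrite mulrC -scalerA tl // scaler0.
Qed.

Section IdealMul.
Variables (R : comPzRingType) (M : lmodType R).

Lemma ideal_mulS (I J : R -> Prop) (y : M) :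
  (forall a, I a -> J a) -> ideal_mul I y -> ideal_mul J y.
Proof. by move=> IJ [s [Is ->]]; exists s; split=> // q /Is /IJ. Qed.

Lemma ideal_mulZ (I : R -> Prop) (a : R) (m : M) : I a -> ideal_mul I (a *: m).
Proof.
move=> Ia; exists [:: (a, m)]; split; last by rewrite big_seq1.
by move=> q; rewrite inE => /eqP ->.
Qed.

Lemma ideal_mulSmodule (I : R -> Prop) : is_ideal I -> is_submodule (ideal_mul I (M := M)).
Proof.
move=> [_ _ IM]; split.
- by exists [::]; split=> //; rewrite big_nil.
- move=> _ _ [s [Is ->]] [t [It ->]]; exists (s ++ t); split; last by rewrite big_cat.
  by move=> q; rewrite mem_cat => /orP[/Is|/It].
- move=> r _ [s [Is ->]]; exists [seq (r * q.1, q.2) | q <- s]; split.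
    by move=> _ /mapP [q /Is Iq ->]; apply: IM.
  by rewrite big_map scaler_sumr; apply: eq_bigr => q _; rewrite scalerA.
Qed.

Lemma cyclic_submodule (m : M) : is_submodule (fun y : M => exists r : R, y = r *: m).
Proof.
split.
- by exists 0; rewrite scale0r.
- by move=> _ _ [r1 ->] [r2 ->]; exists (r1 + r2); rewrite scalerDl.
- by move=> r _ [r1 ->]; exists (r * r1); rewrite scalerA.
Qed.

Definition colon_cyclic (m : M) (b : R) := forall m' : M, exists c, b *: m' = c *: m.

Lemma ideal_mul_colon_cyclic (m : M) :
  multiplication_module M -> ideal_mul (colon_cyclic m) m.
Proof.
move=> M_mul; have [J [_ JM]] := M_mul _ (cyclic_submodule m).
apply: (ideal_mulS (I := J)); last by apply/JM; exists 1; rewrite scale1r.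
by move=> b Jb m'; apply/JM; apply: ideal_mulZ.
Qed.

Lemma ann_ideal : is_ideal (ann M).
Proof.
split.
- by move=> m; rewrite scale0r.
- by move=> a b Ma Mb m; rewrite scalerDl Ma Mb addr0.
- by move=> r a Ma m; rewrite -scalerA Ma scaler0.
Qed.

End IdealMul.

Section PrimeIdealMul.
Variables (R : comPzRingType) (M : lmodType R) (p : R -> Prop).
Hypotheses (M_fg : fin_gen M) (p_prime : prime_ideal p)
  (ann_p : forall r, ann M r -> p r).

Lemma prime_of_scale_ideal_mul a : (forall m : M, ideal_mul p (a *: m)) -> p a.
Proof.
have [s s_gen] := M_fg; have [p_ideal _ _] := p_prime.
move=> aM; apply: contrapT => pa.
have [|t pt ts] := ideal_span_nakayama (l := s) p_prime pa.
  by move=> m _; apply: ideal_mul_span.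
apply: pt; apply: ann_p => m; have [r ->] := s_gen m.
rewrite scaler_sumr big1 // => i _.
by rewrite scalerA mulrC -scalerA ts ?scaler0 // mem_nth.
Qed.

Hypothesis M_mul : multiplication_module M.

Lemma ideal_mul_primeP (m : M) : ideal_mul p m <-> forall b, colon_cyclic m b -> p b.
Proof.
have [p_ideal _ _] := p_prime; have [_ _ pmZ] := ideal_mulSmodule M p_ideal.
split=> [pm b bm | colon_p].
  by apply: prime_of_scale_ideal_mul => m'; have [c ->] := bm m'; apply: pmZ.
exact: ideal_mulS colon_p (ideal_mul_colon_cyclic m M_mul).
Qed.

Lemma prime_submodule_ideal_mul :
  (exists m : M, ~ ideal_mul p m) -> prime_submodule (ideal_mul p (M := M)).
Proof.
have [p_ideal _ pab] := p_prime.
move=> proper; split=> //; first exact: ideal_mulSmodule.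
move=> r m prm; have [pr | npr] := pselect (p r).
  by right=> m'; apply: ideal_mulZ.
left; apply/ideal_mul_primeP => b bm.
have /pab[//|//] : p (r * b).
  apply: ((ideal_mul_primeP (r *: m)).1 prm) => m'; have [c bm'] := bm m'.
  by exists c; rewrite -scalerA bm' !scalerA mulrC.
Qed.

End PrimeIdealMul.

Section Radical.
Variables (R : comPzRingType) (M : lmodType R).

Lemma prime_submodule_scale_rad_ann (N : M -> Prop) a m :
  prime_submodule N -> rad_ann M a -> N (a *: m).
Proof.
move=> [[N0 _ _] _ N_prime] [n an].
suff peel k : N (a ^+ k.+1 *: m) -> N (a *: m).
  by apply: (peel n); rewrite exprSr -scalerA an.
elim: k => [|k IHk]; first by rewrite expr1.
by rewrite exprS -scalerA => /N_prime[/IHk|aN].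
Qed.

Lemma beta_of_sum_aGamma (x : M) : sum_aGamma x -> beta x.
Proof.
move=> [s [s_rad ->]] N N_prime; have [[N0 ND _] _ _] := N_prime.
rewrite big_seq; apply: (big_ind N) => // q /s_rad[a_rad [m [_ ->]]].
exact: prime_submodule_scale_rad_ann.
Qed.

Lemma sum_aGamma_of_ideal_mul_rad_ann (x : M) : ideal_mul (rad_ann M) x -> sum_aGamma x.
Proof.
move=> [s [s_rad ->]]; exists [seq (q.1, q.1 *: q.2) | q <- s].
split; last by rewrite big_map.
move=> _ /mapP [q /s_rad[n an] ->] /=; split; first by exists n.
exists q.2; split => //; exists n.+1; split => //.
by rewrite exprS -scalerA an scaler0.
Qed.

Lemma ideal_mul_rad_ann_of_beta (x : M) :
  fin_gen M -> multiplication_module M -> beta x -> ideal_mul (rad_ann M) x.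
Proof.
move=> M_fg M_mul bx; apply: contrapT => x_rad.
have [j jx j_rad] : exists2 j, colon_cyclic x j & ~ rad_ann M j.
  apply: contrapT => colon_rad; apply: x_rad.
  apply: ideal_mulS (ideal_mul_colon_cyclic x M_mul) => a xa.
  by apply: contrapT => a_rad; apply: colon_rad; exists a.
have [|p [p_prime ann_p pj]] := exists_prime_avoiding_powers (ann_ideal M) (j := j).
  by move=> n jn; apply: j_rad; exists n.
have px : ~ ideal_mul p x.
  by move=> /(ideal_mul_primeP M_fg p_prime ann_p M_mul) /(_ j jx).
apply: (px); apply: bx; apply: (prime_submodule_ideal_mul M_fg p_prime ann_p M_mul).
by exists x.
Qed.

End Radical.

Theorem mainTheorem16 (R : comPzRingType) (M : lmodType R) :
  fin_gen M -> multiplication_module M ->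
  forall x : M, sum_aGamma x <-> beta x.
Proof.
move=> M_fg M_mul x; split; first exact: beta_of_sum_aGamma.
by move=> /(ideal_mul_rad_ann_of_beta M_fg M_mul) /sum_aGamma_of_ideal_mul_rad_ann.
Qed.
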